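(* Let $n\ge1$ and $m\ge2$. The maps $s_0,\dots,s_m$ on the vertex set of $Y_{n,m}$ satisfy the Coxeter relations of $\tilde C_m$: $s_i^2=\mathrm{Id}$ for all $0\le i\le m$; $(s_is_j)^2=\mathrm{Id}$ whenever $|i-j|>1$; $(s_is_{i+1})^3=\mathrm{Id}$ for all $1\le i\le m-2$; and $(s_0s_1)^4=(s_{m-1}s_m)^4=\mathrm{Id}$.
   Context: The Yoke graph $Y_{n,m}$ has vertices the tuples $v=(v_0,\dots,v_{m+1})$ with $v_0,v_{m+1}\in\mathbb{Z}_n$, $v_1,\dots,v_m\in\{0,1\}$, $\sum v_i\equiv0\pmod n$ (bucket entries $v_0,v_{m+1}$ computed mod $n$). For $0\le i\le m$ let $\overleftarrow{s}_i(v)$ be obtained from $v$ by replacing $v_i,v_{i+1}$ with $v_i+1,v_{i+1}-1$, and $\overrightarrow{s}_i(v)$ by replacing them with $v_i-1,v_{i+1}+1$ (whenever the result is a vertex). Define $s_0(v)=\overleftarrow{s}_0(v)$ if $v_1=1$ and $s_0(v)=\overrightarrow{s}_0(v)$ if $v_1=0$; $s_m(v)=\overleftarrow{s}_m(v)$ if $v_m=0$ and $s_m(v)=\overrightarrow{s}_m(v)$ if $v_m=1$; and for $1\le i\le m-1$, $s_i(v)$ is $v$ with entries $v_i$ and $v_{i+1}$ swapped. *)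

From mathcomp Require Import all_boot all_order all_algebra.
Set Implicit Arguments. Unset Strict Implicit. Unset Printing Implicit Defensive.
Import GRing.Theory Num.Theory.
Local Open Scope ring_scope.

Notation tup m := {ffun 'I_(m.+2) -> int}.

Definition bucket (m : nat) (k : 'I_(m.+2)) : bool :=
  (val k == 0%N) || (val k == m.+1).

(* vertex set of the Yoke graph Y_{n,m}: buckets in Z_n (represented by
   0..n-1), inner entries in {0,1}, total sum = 0 mod n *)
Definition is_vertex (n m : nat) (v : tup m) : bool :=
  [forall k : 'I_(m.+2),
     if bucket k then (0 <= v k) && (v k < n%:Z)
     else (v k == 0) || (v k == 1)]
  && (n%:Z %| \sum_(k < m.+2) v k)%Z.

Definition bnorm (n m : nat) (v : tup m) : tup m :=
  [ffun k => if bucket k then (v k %% n%:Z)%Z else v k].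

Definition sL (n m i : nat) (v : tup m) : tup m :=
  bnorm n [ffun k : 'I_(m.+2) =>
    if val k == i then v k + 1 else if val k == i.+1 then v k - 1 else v k].

Definition sR (n m i : nat) (v : tup m) : tup m :=
  bnorm n [ffun k : 'I_(m.+2) =>
    if val k == i then v k - 1 else if val k == i.+1 then v k + 1 else v k].

Definition sW (m i : nat) (v : tup m) : tup m :=
  [ffun k : 'I_(m.+2) =>
    if val k == i then v (inord i.+1)
    else if val k == i.+1 then v (inord i) else v k].

Definition s (n m i : nat) (v : tup m) : tup m :=
  if i == 0%N then (if v (inord 1) == 1 then sL n 0 v else sR n 0 v)
  else if i == m then (if v (inord m) == 0 then sL n m v else sR n m v)
  else sW i v.

From mathcomp Require Import all_boot all_order all_algebra zify.
Import GRing.Theory Num.Theory.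
Set Implicit Arguments. Unset Strict Implicit.
Local Open Scope ring_scope.

(* On a vertex the inner entries are bits.  For 0 < i < m, s_i swaps v_i and
   v_(i+1); s_0 negates the bit v_1 and moves the bucket v_0 by bit_sign v_1,
   i.e. by +1 if v_1 = 1 and by -1 otherwise, and s_m acts in the same way on
   the bit v_m and the bucket v_(m+1).  So every relation except the
   commutations only sees three consecutive entries.  Along (s_0 s_1)^4 the
   bits (v_1, v_2) run through (b, c), (~c, b), (~b, ~c), (c, ~b), (b, c), and
   the bucket moves by bit_sign c + bit_sign b + bit_sign ~c + bit_sign ~b = 0;
   (s_(m-1) s_m)^4 is the mirror image.  Generators at distance at least 2
   act on disjoint entries, except that s_0 and s_m both reduce the two
   buckets mod n, which commutes with their moves by +-1. *)

Definition bit_sign (b : bool) : int := if b then 1 else -1.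

Lemma bit_signN b : bit_sign (~~ b) = - bit_sign b.
Proof. by case: b. Qed.

Lemma modz_bit_signK (d a : int) (b : bool) : (a %% d)%Z = a ->
  ((((a + bit_sign b) %% d)%Z + bit_sign (~~ b)) %% d)%Z = a.
Proof. by move=> ad; rewrite modzDml bit_signN addrK. Qed.

Lemma modz_bit_sign_cycle (d a : int) (b c : bool) : (a %% d)%Z = a ->
  ((((((((a + bit_sign b) %% d)%Z + bit_sign c) %% d)%Z + bit_sign (~~ b)) %% d)%Z
    + bit_sign (~~ c)) %% d)%Z = a.
Proof.
move=> ad; rewrite !modzDml -(addrA (_ %% _)%Z) modzDml !bit_signN.
by rewrite -opprD -(addrA a) addrK.
Qed.

Section Generators.
Variables n m : nat.
Implicit Types (v : tup m) (a b c : int).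

Lemma s0E v k : (0 < m)%N -> s n 0 v k =
  if val k == 0%N then ((v k + bit_sign (v (inord 1) == 1)) %% n%:Z)%Z
  else if val k == 1%N then v k - bit_sign (v (inord 1) == 1)
  else if val k == m.+1 then (v k %% n%:Z)%Z else v k.
Proof.
move=> m_gt0; rewrite /s eqxx /sL /sR /bit_sign.
by case: ifP => _; rewrite !ffunE /bucket /=; repeat case: ifP => //=; lia.
Qed.

Lemma smE v k : (0 < m)%N -> s n m v k =
  if val k == 0%N then (v k %% n%:Z)%Z
  else if val k == m then v k - bit_sign (v (inord m) != 0)
  else if val k == m.+1 then ((v k + bit_sign (v (inord m) != 0)) %% n%:Z)%Z
  else v k.
Proof.
move=> m_gt0; rewrite /s gtn_eqF // eqxx /sL /sR /bit_sign.
by case: ifP => _; rewrite !ffunE /bucket /=; repeat case: ifP => //=; lia.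
Qed.

Lemma swapE i v k : i != 0%N -> i != m -> s n i v k =
  if val k == i then v (inord i.+1) else if val k == i.+1 then v (inord i) else v k.
Proof. by move=> i0 im; rewrite /s (negbTE i0) (negbTE im) ffunE. Qed.

(* Frames are centred at i, so that the frames at both ends of a vertex,
   i = 1 and i = m, need no index arithmetic. *)
Definition patch3 (i : nat) a b c v : tup m :=
  [ffun k => if val k == i.-1 then a else if val k == i then b
             else if val k == i.+1 then c else v k].

Lemma patch3_self i v : (0 < i <= m)%N ->
  patch3 i (v (inord i.-1)) (v (inord i)) (v (inord i.+1)) v = v.
Proof.
move=> le_0im; apply/ffunP => k; rewrite ffunE.
by repeat case: ifP => [/eqP <-|_]; rewrite ?inord_val.
Qed.

Lemma s_patch3_swap12 i a b c v : (1 < i <= m)%N ->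
  s n i.-1 (patch3 i a b c v) = patch3 i b a c v.
Proof.
move=> lt_1im; apply/ffunP => k; rewrite swapE ?ffunE /= ?inordK; try lia.
by repeat case: ifP => //=; lia.
Qed.

Lemma s_patch3_swap23 i a b c v : (0 < i < m)%N ->
  s n i (patch3 i a b c v) = patch3 i a c b v.
Proof.
move=> lt_0im; apply/ffunP => k; rewrite swapE ?ffunE /= ?inordK; try lia.
by repeat case: ifP => //=; lia.
Qed.

Lemma s0_patch3 a (b : bool) c v : (1 < m)%N ->
  s n 0 (patch3 1 a b%:R c v)
  = patch3 1 ((a + bit_sign b) %% n%:Z)%Z (~~ b)%:R c (bnorm n v).
Proof.
move=> m_gt1; apply/ffunP => k; rewrite s0E ?ffunE /= ?inordK /bucket; try lia.
by case: b; repeat case: ifP => //=; lia.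
Qed.

Lemma sm_patch3 a (b : bool) c v : (1 < m)%N ->
  s n m (patch3 m c b%:R a v)
  = patch3 m c (~~ b)%:R ((a + bit_sign b) %% n%:Z)%Z (bnorm n v).
Proof.
move=> m_gt1; apply/ffunP => k; rewrite smE ?ffunE /= ?inordK /bucket; try lia.
by case: b; repeat case: ifP => //=; lia.
Qed.

Lemma s_braid i v : (0 < i)%N -> (i.+1 < m)%N ->
  iter 3 (fun w => s n i (s n i.+1 w)) v = v.
Proof.
move=> i_gt0 lt_im; rewrite -(patch3_self (i := i.+1) v) /=; last lia.
by rewrite !(s_patch3_swap12 (i := i.+1), s_patch3_swap23 (i := i.+1)) //; lia.
Qed.

Lemma vertex_bnorm v : is_vertex n v -> bnorm n v = v.
Proof.
case/andP=> /forallP vv _; apply/ffunP => k; rewrite ffunE.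
by have := vv k; case: bucket => // /modz_small.
Qed.

Lemma vertex_bucket_modz v j : is_vertex n v -> (j == 0%N) || (j == m.+1) ->
  (v (inord j) %% n%:Z)%Z = v (inord j).
Proof.
move=> vv bj; rewrite -{2}(vertex_bnorm vv) ffunE /bucket /= inordK ?bj //.
by case/orP: bj => /eqP ->.
Qed.

Lemma vertex_bitE v j : is_vertex n v -> (0 < j <= m)%N ->
  v (inord j) = (v (inord j) == 1)%:R.
Proof.
case/andP=> /forallP/(_ (inord j)) + _ lt_0jm; rewrite /bucket /= inordK; last lia.
by rewrite ifN; [case/orP => /eqP -> | lia].
Qed.

Hypothesis m_gt1 : (1 < m)%N.

Lemma vertex_frame_left v : is_vertex n v ->
  v = patch3 1 (v (inord 0)) (v (inord 1) == 1)%:R (v (inord 2) == 1)%:R v.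
Proof. by move=> vv; rewrite -!(vertex_bitE vv) ?patch3_self //; lia. Qed.

Lemma vertex_frame_right v : is_vertex n v ->
  v = patch3 m (v (inord m.-1) == 1)%:R (v (inord m) == 1)%:R (v (inord m.+1)) v.
Proof. by move=> vv; rewrite -!(vertex_bitE vv) ?patch3_self //; lia. Qed.

Lemma s_involutive i v : is_vertex n v -> (i <= m)%N -> s n i (s n i v) = v.
Proof.
move=> vv le_im; have vn := vertex_bnorm vv.
have [-> | i0] := eqVneq i 0%N.
  by rewrite (vertex_frame_left vv) !s0_patch3 // negbK !vn
    modz_bit_signK ?(vertex_bucket_modz vv).
have [-> | im] := eqVneq i m.
  by rewrite (vertex_frame_right vv) !sm_patch3 // negbK !vn
    modz_bit_signK ?(vertex_bucket_modz vv) ?eqxx ?orbT.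
rewrite -(patch3_self (i := i) v) ?s_patch3_swap23 //; lia.
Qed.

Lemma s0s1_order4 v : is_vertex n v -> iter 4 (fun w => s n 0 (s n 1 w)) v = v.
Proof.
move=> vv; rewrite (vertex_frame_left vv) /=.
rewrite !(s_patch3_swap23 (i := 1), s0_patch3, vertex_bnorm vv, negbK) //.
by rewrite modz_bit_sign_cycle // vertex_bucket_modz.
Qed.

Lemma sm1sm_order4 v : is_vertex n v -> iter 4 (fun w => s n m.-1 (s n m w)) v = v.
Proof.
move=> vv; rewrite (vertex_frame_right vv) /=.
rewrite !(s_patch3_swap12, sm_patch3, vertex_bnorm vv, negbK) //; try lia.
by rewrite modz_bit_sign_cycle // vertex_bucket_modz ?eqxx ?orbT.
Qed.

End Generators.

Lemma s_commute n m i j (v : tup m) : (i.+1 < j)%N -> (j <= m)%N ->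
  s n i (s n j v) = s n j (s n i v).
Proof.
(* With m replaced by m.+2, the index tests against 0, 1 and m compute. *)
case: m v => [|[|m]] v lt_ij le_jm; try lia.
have j0 : j != 0%N by lia.
have im : i != m.+2 by lia.
apply/ffunP => k.
have [-> | i0] := eqVneq i 0%N; have [-> | jm] := eqVneq j m.+2;
  [ rewrite !s0E ?smE ?s0E
  | rewrite !s0E ?(swapE _ _ _ j0 jm) ?s0E
  | rewrite !(swapE _ _ _ i0 im) ?smE ?(swapE _ _ _ i0 im)
  | rewrite !(swapE _ _ _ i0 im) ?(swapE _ _ _ j0 jm) ?(swapE _ _ _ i0 im) ] => //;
  rewrite /= ?inordK; try lia.
all: by repeat (case: ifP => e; rewrite ?e /=; move: e => ?); try lia;
  rewrite ?modz_mod ?modzDml.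
Qed.

Theorem proposition3p15 (n m : nat) : (1 <= n)%N -> (2 <= m)%N ->
  forall v : {ffun 'I_(m.+2) -> int}, is_vertex n v ->
  [/\ (forall i, (i <= m)%N -> s n i (s n i v) = v),
      (forall i j, (i <= m)%N -> (j <= m)%N -> (j.+1 < i)%N || (i.+1 < j)%N ->
         iter 2 (fun w => s n i (s n j w)) v = v),
      (forall i, (1 <= i)%N -> (i <= m - 2)%N ->
         iter 3 (fun w => s n i (s n i.+1 w)) v = v),
      iter 4 (fun w => s n 0 (s n 1 w)) v = v
    & iter 4 (fun w => s n m.-1 (s n m w)) v = v].
Proof.
move=> _ m_gt1 v vv; split.
- by move=> i; apply: s_involutive.
- move=> i j le_im le_jm /orP[lt_ji | lt_ij] /=.
  + by rewrite (s_commute _ _ lt_ji le_im) !(s_involutive m_gt1).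
  + by rewrite -(s_commute _ _ lt_ij le_jm) !(s_involutive m_gt1).
- by move=> i i_gt0 le_im; apply: s_braid; lia.
- exact: s0s1_order4.
- exact: sm1sm_order4.
Qed.
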